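(* Let $\alpha: I\to M$ be a unit-speed curve on an oriented surface $M\subset E^3$ with Darboux frame $\{T,V,U\}$ and curvatures $k_g,k_n,\tau_g$, and assume $(k_g(s),\tau_g(s))\neq(0,0)$ for all $s$. Let $\gamma(s)=\alpha(s)+y_1(s)T(s)+y_2(s)V(s)+y_3(s)U(s)$, with $y_i$ smooth, be an associated curve whose tangent $\gamma'(s)$ is linearly dependent with $V(s)$, i.e. $\gamma'(s)=R(s)V(s)$ with $R(s)\neq0$ for all $s$. Then the following are equivalent: (i) $\gamma$ is a general helix; (ii) $\alpha$ is a relatively normal-slant helix; (iii) $\alpha$ is a $D_r$-Darboux slant helix.
   Context: $M$ is an oriented surface in Euclidean 3-space $E^3$ and $\alpha:I\to M$ is a unit-speed curve with arc-length parameter $s$. Its Darboux frame $\{T,V,U\}$ consists of the unit tangent $T=\alpha'$, the unit surface normal $U$ of $M$ along $\alpha$, and $V=U\times T$; it satisfies $T'=k_gV+k_nU$, $V'=-k_gT+\tau_gU$, $U'=-k_nT-\tau_gV$, where $k_g,k_n,\tau_g$ are the geodesic curvature, normal curvature and geodesic torsion. A regular curve is a general helix if its unit tangent makes a constant angle with a fixed direction. $\alpha$ is a relatively normal-slant helix if $\langle V,d\rangle$ is constant for some fixed unit vector $d$. The rectifying Darboux vector field is $D_r=\tau_gT+k_gU$; $\alpha$ is a $D_r$-Darboux slant helix if $D_r/\|D_r\|$ makes a constant angle with a fixed unit direction. *)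

From Stdlib Require Import Reals.
From Coquelicot Require Import Coquelicot.
Open Scope R_scope.

Record V3 := mkV3 { v1 : R; v2 : R; v3 : R }.

Definition vadd (x y : V3) : V3 := mkV3 (v1 x + v1 y) (v2 x + v2 y) (v3 x + v3 y).
Definition vscale (c : R) (x : V3) : V3 := mkV3 (c * v1 x) (c * v2 x) (c * v3 x).
Definition vzero : V3 := mkV3 0 0 0.
Definition dot (x y : V3) : R := v1 x * v1 y + v2 x * v2 y + v3 x * v3 y.
Definition cross (x y : V3) : V3 :=
  mkV3 (v2 x * v3 y - v3 x * v2 y) (v3 x * v1 y - v1 x * v3 y) (v1 x * v2 y - v2 x * v1 y).
Definition vnorm (x : V3) : R := sqrt (dot x x).
Definition unitv (x : V3) : V3 := vscale (/ vnorm x) x.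

Definition interval (a b : Rbar) (s : R) : Prop := Rbar_lt a s /\ Rbar_lt s b.

Definition smooth_on (I : R -> Prop) (f : R -> R) : Prop :=
  forall (n : nat) (s : R), I s -> ex_derive_n f n s.

Definition vsmooth_on (I : R -> Prop) (f : R -> V3) : Prop :=
  smooth_on I (fun t => v1 (f t)) /\ smooth_on I (fun t => v2 (f t)) /\
  smooth_on I (fun t => v3 (f t)).

Definition vD (f : R -> V3) (s : R) : V3 :=
  mkV3 (Derive (fun t => v1 (f t)) s) (Derive (fun t => v2 (f t)) s)
       (Derive (fun t => v3 (f t)) s).

(* Darboux frame {T, V, U} of alpha, U the unit surface normal along alpha. *)
Definition dT (alpha : R -> V3) : R -> V3 := vD alpha.
Definition dV (alpha U : R -> V3) : R -> V3 := fun s => cross (U s) (dT alpha s).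

(* Geodesic curvature, normal curvature and geodesic torsion
   (coefficients of the Darboux equations T' = kg V + kn U, V' = -kg T + tg U). *)
Definition kg (alpha U : R -> V3) (s : R) : R := dot (vD (dT alpha) s) (dV alpha U s).
Definition kn (alpha U : R -> V3) (s : R) : R := dot (vD (dT alpha) s) (U s).
Definition tg (alpha U : R -> V3) (s : R) : R := dot (vD (dV alpha U) s) (U s).

Definition Dr (alpha U : R -> V3) (s : R) : V3 :=
  vadd (vscale (tg alpha U s) (dT alpha s)) (vscale (kg alpha U s) (U s)).

Definition general_helix (I : R -> Prop) (gamma : R -> V3) : Prop :=
  (forall s, I s -> vD gamma s <> vzero) /\
  exists d : V3, dot d d = 1 /\ exists c : R,
    forall s, I s -> dot (unitv (vD gamma s)) d = c.

Definition rel_normal_slant_helix (I : R -> Prop) (alpha U : R -> V3) : Prop :=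
  exists d : V3, dot d d = 1 /\ exists c : R,
    forall s, I s -> dot (dV alpha U s) d = c.

Definition Dr_slant_helix (I : R -> Prop) (alpha U : R -> V3) : Prop :=
  exists d : V3, dot d d = 1 /\ exists c : R,
    forall s, I s -> dot (unitv (Dr alpha U s)) d = c.

Definition assoc_curve (alpha U : R -> V3) (y1 y2 y3 : R -> R) (t : R) : V3 :=
  vadd (alpha t) (vadd (vscale (y1 t) (dT alpha t))
        (vadd (vscale (y2 t) (dV alpha U t)) (vscale (y3 t) (U t)))).

From Stdlib Require Import Reals Lra.
From Coquelicot Require Import Coquelicot.
Open Scope R_scope.

(* Let w = |D_r| = sqrt (k_g^2 + t_g^2) > 0 and write D_r = w (cos φ T + sin φ U).  The
   orthonormal frame W = D_r / w, H = - sin φ T + cos φ U, V moves by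
     W' = θ H,   H' = - θ W - w V,   V' = w H,   where θ = φ' + k_n.
   For a fixed unit vector d let c, h, q be its coordinates on W, H, V.

   Since γ' = R V with R <> 0, the unit tangent of γ is ± V, and the sign cannot jump
   by continuity: γ is a general helix iff q is constant.  If q is constant then
   w h = q' = 0, so h = 0 and c^2 = 1 - q^2 is constant; a continuous function with
   values in a finite set is constant on an interval, hence so is c.  Conversely, if c
   is constant then θ h = c' = 0.  Where θ <> 0, h vanishes nearby, so h' = 0, i.e.
   w q = - θ c, and together with c^2 + q^2 = 1 this leaves θ / w at most three
   possible values; so θ / w is constant.  Either θ = 0 everywhere, and W is a fixed
   direction orthogonal to V, or θ never vanishes, h = 0 everywhere and q' = 0. *)

Lemma V3_eq (x y : V3) : v1 x = v1 y -> v2 x = v2 y -> v3 x = v3 y -> x = y.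
Proof. destruct x, y; simpl; intros -> -> ->; reflexivity. Qed.

Lemma V3_eq_dot (x y : V3) : (forall e, dot x e = dot y e) -> x = y.
Proof.
intros E. apply V3_eq;
  [specialize (E (mkV3 1 0 0)) | specialize (E (mkV3 0 1 0)) | specialize (E (mkV3 0 0 1))];
  unfold dot in E; simpl in E; lra.
Qed.

Lemma dot_comm (x y : V3) : dot x y = dot y x.
Proof. unfold dot; ring. Qed.

Lemma dot_cross_r (u t : V3) : dot (cross u t) t = 0.
Proof. unfold dot, cross; simpl; ring. Qed.

Lemma dot_cross_l (u t : V3) : dot (cross u t) u = 0.
Proof. unfold dot, cross; simpl; ring. Qed.

Lemma dot_cross_cross (u t : V3) :
  dot (cross u t) (cross u t) = dot u u * dot t t - dot u t * dot u t.
Proof. unfold dot, cross; simpl; ring. Qed.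

Lemma dot_orthonormal_expansion (t u x e : V3) :
  dot t t = 1 -> dot u u = 1 -> dot u t = 0 ->
  dot x e = dot x t * dot t e + dot x (cross u t) * dot (cross u t) e + dot x u * dot u e.
Proof.
intros Htt Huu Hut.
(* Gram determinant of (u, t, x) against (u, t, e). *)
assert (Gram : dot (cross u t) x * dot (cross u t) e =
  dot u u * (dot t t * dot x e - dot t e * dot x t)
  - dot u t * (dot u t * dot x e - dot t e * dot x u)
  + dot u e * (dot u t * dot x t - dot t t * dot x u))
  by (unfold dot, cross; simpl; ring).
rewrite Htt, Huu, Hut, (dot_comm (cross u t) x) in Gram.
rewrite Gram, (dot_comm x u), (dot_comm t e). ring.
Qed.

Lemma dot_vadd_vscale_l a b (x y e : V3) :
  dot (vadd (vscale a x) (vscale b y)) e = a * dot x e + b * dot y e.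
Proof. unfold dot, vadd, vscale; simpl; ring. Qed.

Lemma dot_vscale_l a (x e : V3) : dot (vscale a x) e = a * dot x e.
Proof. unfold dot, vscale; simpl; ring. Qed.

Lemma Rdiv_Rabs_sq r : r <> 0 -> r / Rabs r * (r / Rabs r) = 1.
Proof.
intros Hr. assert (Rabs r <> 0) by (apply Rabs_no_R0; auto).
assert (E : Rabs r * Rabs r = r * r) by (rewrite <- Rabs_mult; apply Rabs_pos_eq; nra).
replace (r / Rabs r * (r / Rabs r)) with (r * r / (Rabs r * Rabs r)) by (field; auto).
rewrite E. field. auto.
Qed.

Lemma dot_unitv_vscale r (x d : V3) :
  dot x x = 1 -> dot (unitv (vscale r x)) d = r / Rabs r * dot x d.
Proof.
intros Hx. unfold unitv, vnorm.
replace (dot (vscale r x) (vscale r x)) with (r * r * dot x x) by (unfold dot, vscale; simpl; ring).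
rewrite Hx, Rmult_1_r. change (r * r) with (Rsqr r). rewrite sqrt_Rsqr_abs.
unfold dot, vscale; simpl. unfold Rdiv. ring.
Qed.

Lemma is_derive_eq (f : R -> R) (s l l' : R) : is_derive f s l -> l = l' -> is_derive f s l'.
Proof. now intros D <-. Qed.

Lemma is_derive_Rplus (f g : R -> R) s df dg :
  is_derive f s df -> is_derive g s dg -> is_derive (fun t => f t + g t) s (df + dg).
Proof. apply (is_derive_plus (K := R_AbsRing) (V := R_NormedModule)). Qed.

Lemma is_derive_Rmult (f g : R -> R) s df dg :
  is_derive f s df -> is_derive g s dg -> is_derive (fun t => f t * g t) s (df * g s + f s * dg).
Proof. intros Df Dg. apply (is_derive_mult (K := R_AbsRing)); auto. apply Rmult_comm. Qed.

Fixpoint Cn_on (I : R -> Prop) (n : nat) (f : R -> R) : Prop :=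
  match n with
  | O => True
  | S m => (forall s, I s -> ex_derive f s) /\ Cn_on I m (Derive f)
  end.

(* An inductive rather than a definition, so that [intros] and [auto] do not unfold it. *)
Inductive Cinf_on (I : R -> Prop) (f : R -> R) : Prop :=
  Cinf_on_intro : (forall n, Cn_on I n f) -> Cinf_on I f.

Definition VCinf_on (I : R -> Prop) (F : R -> V3) : Prop :=
  Cinf_on I (fun t => v1 (F t)) /\ Cinf_on I (fun t => v2 (F t)) /\ Cinf_on I (fun t => v3 (F t)).

Lemma Cinf_on_of_smooth_on I f : smooth_on I f -> Cinf_on I f.
Proof.
intros Hf. constructor. intros n. change f with (Derive_n f 0). generalize 0%nat as k.
induction n as [|n IH]; simpl; auto. intro k. split.
- intros s Hs. exact (Hf (S k) s Hs).
- exact (IH (S k)).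
Qed.

Lemma VCinf_on_of_vsmooth_on I F : vsmooth_on I F -> VCinf_on I F.
Proof. intros (F1 & F2 & F3). split; [|split]; apply Cinf_on_of_smooth_on; auto. Qed.

Section Smoothness.

Variable I : R -> Prop.
Hypothesis I_open : open I.

Lemma locally_eq_on (f g : R -> R) s :
  I s -> (forall t, I t -> f t = g t) -> locally s (fun t => f t = g t).
Proof. intros Hs E. exact (filter_imp _ _ E (I_open s Hs)). Qed.

Lemma Cn_on_ext n : forall f g, (forall s, I s -> f s = g s) -> Cn_on I n f -> Cn_on I n g.
Proof.
induction n as [|n IH]; simpl; auto.
intros f g E [Df Cf]. split.
- intros s Hs. apply ex_derive_ext_loc with f; [apply locally_eq_on|]; auto.
- apply IH with (Derive f); auto.
  intros s Hs. apply Derive_ext_loc, locally_eq_on; auto.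
Qed.

Lemma Cn_on_pred n f : Cn_on I (S n) f -> Cn_on I n f.
Proof. revert f; induction n as [|n IH]; simpl; auto. intros f [Df Cf]; split; auto. Qed.

Lemma Cn_on_const n c : Cn_on I n (fun _ => c).
Proof.
revert c; induction n as [|n IH]; simpl; auto. intros c; split.
- intros; apply ex_derive_const.
- apply (Cn_on_ext n (fun _ => 0)); auto.
  intros s _. now rewrite Derive_const.
Qed.

Lemma Cn_on_plus n : forall f g, Cn_on I n f -> Cn_on I n g -> Cn_on I n (fun t => f t + g t).
Proof.
induction n as [|n IH]; simpl; auto. intros f g [Df Cf] [Dg Cg]. split.
- intros s Hs. apply (ex_derive_plus f g); auto.
- apply (Cn_on_ext n (fun t => Derive f t + Derive g t)); auto.
  intros s Hs. symmetry. apply (Derive_plus f g); auto.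
Qed.

Lemma Cn_on_mult n : forall f g, Cn_on I n f -> Cn_on I n g -> Cn_on I n (fun t => f t * g t).
Proof.
induction n as [|n IH]; simpl; auto. intros f g Cf Cg.
pose proof Cf as [Df Cf']; pose proof Cg as [Dg Cg']. split.
- intros s Hs. apply ex_derive_mult; auto.
- apply (Cn_on_ext n (fun t => Derive f t * g t + f t * Derive g t)).
  + intros s Hs. symmetry. apply Derive_mult; auto.
  + apply Cn_on_plus; apply IH; auto; apply Cn_on_pred; [exact Cg | exact Cf].
Qed.

Lemma Cn_on_inv n : forall f,
  (forall s, I s -> f s <> 0) -> Cn_on I n f -> Cn_on I n (fun t => / f t).
Proof.
induction n as [|n IH]; simpl; auto. intros f Hf Cf.
pose proof Cf as [Df Cf']. split.
- intros s Hs. apply ex_derive_inv; auto.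
- apply (Cn_on_ext n (fun t => (-1) * Derive f t * (/ f t * / f t))).
  + intros s Hs. rewrite Derive_inv; auto. field. auto.
  + apply Cn_on_mult; [apply Cn_on_mult; auto; apply Cn_on_const|].
    apply Cn_on_mult; apply IH; auto; apply Cn_on_pred; exact Cf.
Qed.

Lemma Cn_on_sqrt n : forall f,
  (forall s, I s -> 0 < f s) -> Cn_on I n f -> Cn_on I n (fun t => sqrt (f t)).
Proof.
induction n as [|n IH]; simpl; auto. intros f Hf Cf.
pose proof Cf as [Df Cf'].
assert (sqrt_nz : forall s, I s -> sqrt (f s) <> 0).
{ intros s Hs. apply Rgt_not_eq, sqrt_lt_R0; auto. }
assert (Dsqrt : forall s, I s ->
  is_derive (fun t => sqrt (f t)) s (Derive f s * (/ 2 * / sqrt (f s)))).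
{ intros s Hs. eapply is_derive_eq.
  - apply is_derive_sqrt; auto. apply Derive_correct; auto.
  - field. auto. }
split.
- intros s Hs. eexists. apply Dsqrt; auto.
- apply (Cn_on_ext n (fun t => Derive f t * (/ 2 * / sqrt (f t)))).
  + intros s Hs. symmetry. apply is_derive_unique, Dsqrt; auto.
  + apply Cn_on_mult; auto. apply Cn_on_mult; [apply Cn_on_const|].
    apply Cn_on_inv; auto. apply IH; auto. apply Cn_on_pred; exact Cf.
Qed.

Lemma Cinf_on_ext f g : (forall s, I s -> f s = g s) -> Cinf_on I f -> Cinf_on I g.
Proof. intros E [Cf]. constructor. intros n. exact (Cn_on_ext n f g E (Cf n)). Qed.

Lemma Cinf_on_const c : Cinf_on I (fun _ => c).
Proof. constructor. intros n. apply Cn_on_const. Qed.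

Lemma Cinf_on_plus f g : Cinf_on I f -> Cinf_on I g -> Cinf_on I (fun t => f t + g t).
Proof. intros [Cf] [Cg]. constructor. intros n. apply Cn_on_plus; auto. Qed.

Lemma Cinf_on_mult f g : Cinf_on I f -> Cinf_on I g -> Cinf_on I (fun t => f t * g t).
Proof. intros [Cf] [Cg]. constructor. intros n. apply Cn_on_mult; auto. Qed.

Lemma Cinf_on_opp f : Cinf_on I f -> Cinf_on I (fun t => - f t).
Proof.
intros Cf. apply (Cinf_on_ext (fun t => (-1) * f t)); [intros; ring|].
apply Cinf_on_mult; auto using Cinf_on_const.
Qed.

Lemma Cinf_on_minus f g : Cinf_on I f -> Cinf_on I g -> Cinf_on I (fun t => f t - g t).
Proof.
intros Cf Cg. apply (Cinf_on_ext (fun t => f t + - g t)); [intros; ring|].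
apply Cinf_on_plus, Cinf_on_opp; auto.
Qed.

Lemma Cinf_on_inv f : (forall s, I s -> f s <> 0) -> Cinf_on I f -> Cinf_on I (fun t => / f t).
Proof. intros Hf [Cf]. constructor. intros n. apply Cn_on_inv; auto. Qed.

Lemma Cinf_on_div f g : (forall s, I s -> g s <> 0) ->
  Cinf_on I f -> Cinf_on I g -> Cinf_on I (fun t => f t / g t).
Proof. intros Hg Cf Cg. apply Cinf_on_mult, Cinf_on_inv; auto. Qed.

Lemma Cinf_on_sqrt f : (forall s, I s -> 0 < f s) -> Cinf_on I f -> Cinf_on I (fun t => sqrt (f t)).
Proof. intros Hf [Cf]. constructor. intros n. apply Cn_on_sqrt; auto. Qed.

Lemma Cinf_on_Derive f : Cinf_on I f -> Cinf_on I (Derive f).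
Proof. intros [Cf]. constructor. intros n. exact (proj2 (Cf (S n))). Qed.

Lemma Cinf_on_is_derive f s : Cinf_on I f -> I s -> is_derive f s (Derive f s).
Proof. intros [Cf] Hs. apply Derive_correct. exact (proj1 (Cf 1%nat) s Hs). Qed.

Lemma Cinf_on_continuous f s : Cinf_on I f -> I s -> continuous f s.
Proof.
intros Cf Hs. apply (ex_derive_continuous (K := R_AbsRing) (V := R_NormedModule)).
eexists. apply Cinf_on_is_derive; eauto.
Qed.

Lemma VCinf_on_const e : VCinf_on I (fun _ => e).
Proof. split; [|split]; apply Cinf_on_const. Qed.

Lemma VCinf_on_vD F : VCinf_on I F -> VCinf_on I (vD F).
Proof. intros (F1 & F2 & F3). split; [|split]; apply Cinf_on_Derive; auto. Qed.

Lemma VCinf_on_vadd F G : VCinf_on I F -> VCinf_on I G -> VCinf_on I (fun t => vadd (F t) (G t)).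
Proof. intros (F1 & F2 & F3) (G1 & G2 & G3). split; [|split]; apply Cinf_on_plus; auto. Qed.

Lemma VCinf_on_vscale c F : Cinf_on I c -> VCinf_on I F -> VCinf_on I (fun t => vscale (c t) (F t)).
Proof. intros Cc (F1 & F2 & F3). split; [|split]; apply Cinf_on_mult; auto. Qed.

Lemma VCinf_on_cross F G : VCinf_on I F -> VCinf_on I G -> VCinf_on I (fun t => cross (F t) (G t)).
Proof.
intros (F1 & F2 & F3) (G1 & G2 & G3).
split; [|split]; apply Cinf_on_minus; apply Cinf_on_mult; auto.
Qed.

Lemma Cinf_on_dot F G : VCinf_on I F -> VCinf_on I G -> Cinf_on I (fun t => dot (F t) (G t)).
Proof.
intros (F1 & F2 & F3) (G1 & G2 & G3).
apply Cinf_on_plus; [apply Cinf_on_plus|]; apply Cinf_on_mult; auto.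
Qed.

Lemma is_derive_dot F G s : VCinf_on I F -> VCinf_on I G -> I s ->
  is_derive (fun t => dot (F t) (G t)) s (dot (vD F s) (G s) + dot (F s) (vD G s)).
Proof.
intros (F1 & F2 & F3) (G1 & G2 & G3) Hs.
eapply is_derive_eq.
- apply is_derive_Rplus; [apply is_derive_Rplus|];
    apply is_derive_Rmult; apply Cinf_on_is_derive; auto.
- unfold dot, vD; simpl. ring.
Qed.

Lemma is_derive_dot_const F d s : VCinf_on I F -> I s ->
  is_derive (fun t => dot (F t) d) s (dot (vD F s) d).
Proof.
intros CF Hs. eapply is_derive_eq;
  [apply (is_derive_dot F (fun _ => d)); auto using VCinf_on_const|].
unfold vD at 2. rewrite !Derive_const. unfold dot; simpl. ring.
Qed.

Lemma is_derive_constant_on (h : R -> R) (c s l : R) :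
  (forall t, I t -> h t = c) -> I s -> is_derive h s l -> l = 0.
Proof.
intros Hc Hs Dh. rewrite <- (is_derive_unique _ _ _ Dh).
apply is_derive_unique, (is_derive_ext_loc (fun _ => c)).
- apply locally_eq_on; auto. intros t Ht. symmetry; auto.
- apply (is_derive_const (K := R_AbsRing) (V := R_NormedModule)).
Qed.

Lemma derive_constant_dot F G c s : VCinf_on I F -> VCinf_on I G ->
  (forall t, I t -> dot (F t) (G t) = c) -> I s ->
  dot (vD F s) (G s) = - dot (vD G s) (F s).
Proof.
intros CF CG Hc Hs.
assert (D0 := is_derive_constant_on _ c s _ Hc Hs (is_derive_dot F G s CF CG Hs)).
rewrite (dot_comm (F s)) in D0. lra.
Qed.

Lemma vD_lincomb a b X Y s :
  Cinf_on I a -> Cinf_on I b -> VCinf_on I X -> VCinf_on I Y -> I s ->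
  vD (fun t => vadd (vscale (a t) (X t)) (vscale (b t) (Y t))) s =
  vadd (vadd (vscale (Derive a s) (X s)) (vscale (a s) (vD X s)))
       (vadd (vscale (Derive b s) (Y s)) (vscale (b s) (vD Y s))).
Proof.
intros Ca Cb (X1 & X2 & X3) (Y1 & Y2 & Y3) Hs.
unfold vD, vadd, vscale; simpl.
f_equal; apply is_derive_unique;
  apply is_derive_Rplus; apply is_derive_Rmult; apply Cinf_on_is_derive; auto.
Qed.

End Smoothness.

Definition is_interval (I : R -> Prop) : Prop :=
  forall s t u, I s -> I t -> s <= u <= t -> I u.

Lemma interval_open a b : open (interval a b).
Proof. apply open_and; [apply open_Rbar_gt | apply open_Rbar_lt]. Qed.

Lemma interval_is_interval a b : is_interval (interval a b).
Proof.
intros s t u [Ha _] [_ Hb] Hu. split.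
- destruct a as [a| |]; simpl in *; auto; lra.
- destruct b as [b| |]; simpl in *; auto; lra.
Qed.

Lemma interval_inhabited a b : Rbar_lt a b -> exists s, interval a b s.
Proof.
destruct a as [a| |], b as [b| |]; simpl; intros H; try contradiction.
- exists ((a + b) / 2). split; simpl; lra.
- exists (a + 1). split; simpl; auto; lra.
- exists (b - 1). split; simpl; auto; lra.
- exists 0. split; simpl; auto.
Qed.

Lemma zero_or_square_gap x y K : (x = 0 \/ x * x = K) -> (y = 0 \/ y * y = K) -> x <> y ->
  ~ ((x + 3 * y) / 4 = 0 \/ (x + 3 * y) / 4 * ((x + 3 * y) / 4) = K).
Proof. intros [-> | Hx] [-> | Hy] Hxy [Hz | Hz]; nra. Qed.

Section Connectedness.

Variable I : R -> Prop.
Hypothesis I_interval : is_interval I.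

Lemma derive_zero_constant (g : R -> R) :
  (forall s, I s -> is_derive g s 0) -> forall s t, I s -> I t -> g s = g t.
Proof.
intros Dg.
assert (ordered : forall s t, s <= t -> I s -> I t -> g s = g t).
{ intros s t Hst Hs Ht.
  assert (It : forall u, s <= u <= t -> I u) by (intros; apply (I_interval s t); auto).
  destruct (MVT_gen g s t (fun _ => 0)) as [c [_ Hc]].
  - rewrite Rmin_left, Rmax_right by lra. intros u Hu. apply Dg, It; lra.
  - rewrite Rmin_left, Rmax_right by lra. intros u Hu. apply continuity_pt_filterlim.
    apply (ex_derive_continuous (K := R_AbsRing) (V := R_NormedModule)).
    exists 0. apply Dg, It; lra.
  - lra. }
intros s t Hs Ht. destruct (Rle_or_lt s t); [|symmetry]; apply ordered; auto; lra.
Qed.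

Lemma continuous_zero_or_square_constant (g : R -> R) (K : R) :
  (forall s, I s -> continuous g s) -> (forall s, I s -> g s = 0 \/ g s * g s = K) ->
  forall s t, I s -> I t -> g s = g t.
Proof.
intros Cg Sg.
assert (ordered : forall s t, s <= t -> I s -> I t -> g s = g t).
{ intros s t Hst Hs Ht. destruct (Req_dec (g s) (g t)) as [|Hne]; auto. exfalso.
  set (z := (g s + 3 * g t) / 4).
  (* [h] changes sign on [s, t] whichever of [g s], [g t] is larger. *)
  set (h := fun u => (g u - z) * (g t - g s)).
  assert (Hlt : 0 < (g t - g s) * (g t - g s)).
  { apply Rsqr_pos_lt. intro; apply Hne; lra. }
  destruct (Ranalysis5.IVT_interv h s t) as [u [Hu Hhu]].
  - intros u Hu. unfold h. apply continuity_pt_mult; [|apply continuity_pt_const; intros ? ?; auto].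
    apply continuity_pt_minus; [|apply continuity_pt_const; intros ? ?; auto].
    apply continuity_pt_filterlim, Cg, (I_interval s t); auto.
  - destruct (Req_dec s t) as [<- | ]; [contradiction|lra].
  - unfold h, z. nra.
  - unfold h, z. nra.
  - apply (zero_or_square_gap (g s) (g t) K); auto.
    assert (Hgu : g u = z).
    { unfold h in Hhu. destruct (Rmult_integral _ _ Hhu); [lra|]. exfalso; apply Hne; lra. }
    fold z. rewrite <- Hgu. apply Sg, (I_interval s t); auto. }
intros s t Hs Ht. destruct (Rle_or_lt s t); [|symmetry]; apply ordered; auto; lra.
Qed.

End Connectedness.

Section DarbouxFrame.

Variable I : R -> Prop.
Hypothesis I_open : open I.
Variables alpha U : R -> V3.
Hypothesis alpha_smooth : vsmooth_on I alpha.
Hypothesis U_smooth : vsmooth_on I U.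
Hypothesis T_unit : forall s, I s -> dot (dT alpha s) (dT alpha s) = 1.
Hypothesis U_unit : forall s, I s -> dot (U s) (U s) = 1.
Hypothesis U_perp_T : forall s, I s -> dot (U s) (dT alpha s) = 0.

Lemma VCinf_on_T : VCinf_on I (dT alpha).
Proof. apply VCinf_on_vD, VCinf_on_of_vsmooth_on; auto. Qed.

Lemma VCinf_on_U : VCinf_on I U.
Proof. apply VCinf_on_of_vsmooth_on; auto. Qed.

Lemma VCinf_on_V : VCinf_on I (dV alpha U).
Proof. apply VCinf_on_cross; auto using VCinf_on_U, VCinf_on_T. Qed.

Lemma Cinf_on_kg : Cinf_on I (kg alpha U).
Proof. apply Cinf_on_dot; auto using VCinf_on_vD, VCinf_on_T, VCinf_on_V. Qed.

Lemma Cinf_on_kn : Cinf_on I (kn alpha U).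
Proof. apply Cinf_on_dot; auto using VCinf_on_vD, VCinf_on_T, VCinf_on_U. Qed.

Lemma Cinf_on_tg : Cinf_on I (tg alpha U).
Proof. apply Cinf_on_dot; auto using VCinf_on_vD, VCinf_on_V, VCinf_on_U. Qed.

Lemma V_unit s : I s -> dot (dV alpha U s) (dV alpha U s) = 1.
Proof. intros Hs. unfold dV. rewrite dot_cross_cross, U_unit, T_unit, U_perp_T by auto. ring. Qed.

Lemma V_perp_T s : dot (dV alpha U s) (dT alpha s) = 0.
Proof. apply dot_cross_r. Qed.

Lemma V_perp_U s : dot (dV alpha U s) (U s) = 0.
Proof. apply dot_cross_l. Qed.

Lemma darboux_expansion s X e : I s ->
  dot X e = dot X (dT alpha s) * dot (dT alpha s) e + dot X (dV alpha U s) * dot (dV alpha U s) e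
            + dot X (U s) * dot (U s) e.
Proof. intros Hs. apply dot_orthonormal_expansion; auto. Qed.

Lemma darboux_T s : I s ->
  vD (dT alpha) s = vadd (vscale (kg alpha U s) (dV alpha U s)) (vscale (kn alpha U s) (U s)).
Proof.
intros Hs.
assert (TT : dot (vD (dT alpha) s) (dT alpha s) = 0).
{ pose proof (derive_constant_dot I I_open _ _ 1 s VCinf_on_T VCinf_on_T T_unit Hs). lra. }
apply V3_eq_dot. intros e.
rewrite (darboux_expansion s _ e Hs), TT, dot_vadd_vscale_l. unfold kg, kn. ring.
Qed.

Lemma darboux_V s : I s ->
  vD (dV alpha U) s = vadd (vscale (- kg alpha U s) (dT alpha s)) (vscale (tg alpha U s) (U s)).
Proof.
intros Hs.
assert (VT : dot (vD (dV alpha U) s) (dT alpha s) = - kg alpha U s).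
{ apply (derive_constant_dot I I_open _ _ 0); auto using VCinf_on_V, VCinf_on_T, V_perp_T. }
assert (VV : dot (vD (dV alpha U) s) (dV alpha U s) = 0).
{ pose proof (derive_constant_dot I I_open _ _ 1 s VCinf_on_V VCinf_on_V V_unit Hs). lra. }
apply V3_eq_dot. intros e.
rewrite (darboux_expansion s _ e Hs), VT, VV, dot_vadd_vscale_l. unfold tg. ring.
Qed.

Lemma darboux_U s : I s ->
  vD U s = vadd (vscale (- kn alpha U s) (dT alpha s)) (vscale (- tg alpha U s) (dV alpha U s)).
Proof.
intros Hs.
assert (UT : dot (vD U s) (dT alpha s) = - kn alpha U s).
{ apply (derive_constant_dot I I_open _ _ 0); auto using VCinf_on_U, VCinf_on_T. }
assert (UV : dot (vD U s) (dV alpha U s) = - tg alpha U s).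
{ apply (derive_constant_dot I I_open _ _ 0); auto using VCinf_on_U, VCinf_on_V.
  intros t _. rewrite dot_comm. apply V_perp_U. }
assert (UU : dot (vD U s) (U s) = 0).
{ pose proof (derive_constant_dot I I_open _ _ 1 s VCinf_on_U VCinf_on_U U_unit Hs). lra. }
apply V3_eq_dot. intros e.
rewrite (darboux_expansion s _ e Hs), UT, UV, UU, dot_vadd_vscale_l. ring.
Qed.

Lemma VCinf_on_assoc_curve y1 y2 y3 :
  smooth_on I y1 -> smooth_on I y2 -> smooth_on I y3 -> VCinf_on I (assoc_curve alpha U y1 y2 y3).
Proof.
intros S1 S2 S3. unfold assoc_curve.
apply VCinf_on_vadd; auto using VCinf_on_of_vsmooth_on.
apply VCinf_on_vadd; auto; [|apply VCinf_on_vadd; auto];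
  apply VCinf_on_vscale; auto using Cinf_on_of_smooth_on, VCinf_on_T, VCinf_on_V, VCinf_on_U.
Qed.

Lemma continuous_speed_along_V (gamma : R -> V3) (Rf : R -> R) : VCinf_on I gamma ->
  (forall s, I s -> vD gamma s = vscale (Rf s) (dV alpha U s)) -> forall s, I s -> continuous Rf s.
Proof.
intros Cgamma HR s Hs. apply (Cinf_on_continuous I); auto.
apply (Cinf_on_ext I I_open (fun t => dot (vD gamma t) (dV alpha U t))).
- intros t Ht. rewrite HR, dot_vscale_l, V_unit by auto. ring.
- apply Cinf_on_dot; auto using VCinf_on_vD, VCinf_on_V.
Qed.

Hypothesis kg_tg_nonzero : forall s, I s -> (kg alpha U s, tg alpha U s) <> (0, 0).

(* [Dr_norm], [Dr_unit], [Dr_normal] and [Dr_curvature] are w, W, H and θ above;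
   [Dr_cos], [Dr_sin] are cos φ, sin φ and [Dr_rotation] is φ'. *)
Definition Dr_norm s := sqrt (kg alpha U s * kg alpha U s + tg alpha U s * tg alpha U s).
Definition Dr_cos s := tg alpha U s / Dr_norm s.
Definition Dr_sin s := kg alpha U s / Dr_norm s.
Definition Dr_rotation s :=
  (Derive (kg alpha U) s * tg alpha U s - Derive (tg alpha U) s * kg alpha U s)
  / (Dr_norm s * Dr_norm s).
Definition Dr_curvature s := Dr_rotation s + kn alpha U s.
Definition Dr_unit s := vadd (vscale (Dr_cos s) (dT alpha s)) (vscale (Dr_sin s) (U s)).
Definition Dr_normal s := vadd (vscale (- Dr_sin s) (dT alpha s)) (vscale (Dr_cos s) (U s)).

Lemma Dr_norm_sq_pos s : I s -> 0 < kg alpha U s * kg alpha U s + tg alpha U s * tg alpha U s.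
Proof.
intros Hs. destruct (Req_dec (kg alpha U s) 0) as [Hk|Hk].
- assert (tg alpha U s <> 0) by (intros Ht; apply (kg_tg_nonzero s Hs); rewrite Hk, Ht; auto).
  rewrite Hk. nra.
- nra.
Qed.

Lemma Dr_norm_sq s : I s ->
  Dr_norm s * Dr_norm s = kg alpha U s * kg alpha U s + tg alpha U s * tg alpha U s.
Proof. intros Hs. apply sqrt_sqrt. left. apply Dr_norm_sq_pos; auto. Qed.

Lemma Dr_norm_pos s : I s -> 0 < Dr_norm s.
Proof. intros Hs. apply sqrt_lt_R0, Dr_norm_sq_pos; auto. Qed.

Lemma Dr_norm_neq0 s : I s -> Dr_norm s <> 0.
Proof. intros Hs. apply Rgt_not_eq, Dr_norm_pos; auto. Qed.

Lemma kg_Dr_norm s : I s -> kg alpha U s = Dr_norm s * Dr_sin s.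
Proof. intros Hs. unfold Dr_sin. field. apply Dr_norm_neq0; auto. Qed.

Lemma tg_Dr_norm s : I s -> tg alpha U s = Dr_norm s * Dr_cos s.
Proof. intros Hs. unfold Dr_cos. field. apply Dr_norm_neq0; auto. Qed.

Lemma Dr_sin_kg_cos_tg s : I s -> Dr_sin s * kg alpha U s + Dr_cos s * tg alpha U s = Dr_norm s.
Proof.
intros Hs. pose proof (Dr_norm_neq0 s Hs). unfold Dr_sin, Dr_cos.
replace (kg alpha U s / Dr_norm s * kg alpha U s + tg alpha U s / Dr_norm s * tg alpha U s)
  with ((Dr_norm s * Dr_norm s) / Dr_norm s) by (rewrite Dr_norm_sq by auto; field; auto).
field; auto.
Qed.

Lemma Dr_cos_sin_sq s : I s -> Dr_cos s * Dr_cos s + Dr_sin s * Dr_sin s = 1.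
Proof.
intros Hs. pose proof (Dr_norm_neq0 s Hs).
apply (Rmult_eq_reg_l (Dr_norm s)); auto.
rewrite <- (Dr_sin_kg_cos_tg s Hs) at 2. rewrite kg_Dr_norm, tg_Dr_norm by auto. ring.
Qed.

Lemma Cinf_on_Dr_norm : Cinf_on I Dr_norm.
Proof.
unfold Dr_norm. apply Cinf_on_sqrt; auto using Dr_norm_sq_pos.
apply Cinf_on_plus; auto; apply Cinf_on_mult; auto using Cinf_on_kg, Cinf_on_tg.
Qed.

Lemma Cinf_on_Dr_cos : Cinf_on I Dr_cos.
Proof. unfold Dr_cos. apply Cinf_on_div; auto using Dr_norm_neq0, Cinf_on_tg, Cinf_on_Dr_norm. Qed.

Lemma Cinf_on_Dr_sin : Cinf_on I Dr_sin.
Proof. unfold Dr_sin. apply Cinf_on_div; auto using Dr_norm_neq0, Cinf_on_kg, Cinf_on_Dr_norm. Qed.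

Lemma Cinf_on_Dr_curvature : Cinf_on I Dr_curvature.
Proof.
unfold Dr_curvature, Dr_rotation. apply Cinf_on_plus; auto using Cinf_on_kn.
apply Cinf_on_div; auto using Cinf_on_mult, Cinf_on_Dr_norm.
- intros s Hs. apply Rmult_integral_contrapositive_currified; apply Dr_norm_neq0; auto.
- apply Cinf_on_minus; auto; apply Cinf_on_mult; auto using Cinf_on_Derive, Cinf_on_kg, Cinf_on_tg.
Qed.

Lemma VCinf_on_Dr_unit : VCinf_on I Dr_unit.
Proof.
apply VCinf_on_vadd; auto; apply VCinf_on_vscale;
  auto using Cinf_on_Dr_cos, Cinf_on_Dr_sin, VCinf_on_T, VCinf_on_U.
Qed.

Lemma VCinf_on_Dr_normal : VCinf_on I Dr_normal.
Proof.
apply VCinf_on_vadd; auto; apply VCinf_on_vscale;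
  auto using Cinf_on_opp, Cinf_on_Dr_sin, Cinf_on_Dr_cos, VCinf_on_T, VCinf_on_U.
Qed.

Lemma is_derive_Dr_norm s : I s -> is_derive Dr_norm s
  ((kg alpha U s * Derive (kg alpha U) s + tg alpha U s * Derive (tg alpha U) s) / Dr_norm s).
Proof.
intros Hs. eapply is_derive_eq.
- apply is_derive_sqrt; [|apply Dr_norm_sq_pos; auto].
  apply is_derive_Rplus; apply is_derive_Rmult; apply (Cinf_on_is_derive I);
    auto using Cinf_on_kg, Cinf_on_tg.
- cbv beta. fold (Dr_norm s). field. apply Dr_norm_neq0; auto.
Qed.

Lemma is_derive_Dr_cos s : I s -> is_derive Dr_cos s (- Dr_sin s * Dr_rotation s).
Proof.
intros Hs. pose proof (Dr_norm_neq0 s Hs). pose proof (Dr_norm_sq_pos s Hs).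
eapply is_derive_eq.
- apply is_derive_div; auto using is_derive_Dr_norm.
  apply (Cinf_on_is_derive I); auto using Cinf_on_tg.
- unfold Dr_sin, Dr_rotation.
  transitivity ((Derive (tg alpha U) s * (Dr_norm s * Dr_norm s)
    - tg alpha U s * (kg alpha U s * Derive (kg alpha U) s + tg alpha U s * Derive (tg alpha U) s))
    / (Dr_norm s * Dr_norm s * Dr_norm s)); [field; auto|].
  rewrite !Dr_norm_sq by auto. field. lra.
Qed.

Lemma is_derive_Dr_sin s : I s -> is_derive Dr_sin s (Dr_cos s * Dr_rotation s).
Proof.
intros Hs. pose proof (Dr_norm_neq0 s Hs). pose proof (Dr_norm_sq_pos s Hs).
eapply is_derive_eq.
- apply is_derive_div; auto using is_derive_Dr_norm.
  apply (Cinf_on_is_derive I); auto using Cinf_on_kg.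
- unfold Dr_cos, Dr_rotation.
  transitivity ((Derive (kg alpha U) s * (Dr_norm s * Dr_norm s)
    - kg alpha U s * (kg alpha U s * Derive (kg alpha U) s + tg alpha U s * Derive (tg alpha U) s))
    / (Dr_norm s * Dr_norm s * Dr_norm s)); [field; auto|].
  rewrite !Dr_norm_sq by auto. field. lra.
Qed.

Lemma vD_Dr_unit s : I s -> vD Dr_unit s = vscale (Dr_curvature s) (Dr_normal s).
Proof.
intros Hs. unfold Dr_unit.
rewrite (vD_lincomb I) by auto using Cinf_on_Dr_cos, Cinf_on_Dr_sin, VCinf_on_T, VCinf_on_U.
rewrite (is_derive_unique _ _ _ (is_derive_Dr_cos s Hs)),
  (is_derive_unique _ _ _ (is_derive_Dr_sin s Hs)).
rewrite darboux_T, darboux_U, (kg_Dr_norm s Hs), (tg_Dr_norm s Hs) by auto.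
unfold Dr_curvature, Dr_normal. apply V3_eq; simpl; ring.
Qed.

Lemma vD_Dr_normal s : I s ->
  vD Dr_normal s =
  vadd (vscale (- Dr_curvature s) (Dr_unit s)) (vscale (- Dr_norm s) (dV alpha U s)).
Proof.
intros Hs. unfold Dr_normal.
rewrite (vD_lincomb I)
  by auto using Cinf_on_opp, Cinf_on_Dr_cos, Cinf_on_Dr_sin, VCinf_on_T, VCinf_on_U.
rewrite Derive_opp, (is_derive_unique _ _ _ (is_derive_Dr_cos s Hs)),
  (is_derive_unique _ _ _ (is_derive_Dr_sin s Hs)), darboux_T, darboux_U by auto.
rewrite <- (Dr_sin_kg_cos_tg s Hs).
unfold Dr_curvature, Dr_unit. apply V3_eq; simpl; ring.
Qed.

Lemma vD_V_Dr_normal s : I s -> vD (dV alpha U) s = vscale (Dr_norm s) (Dr_normal s).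
Proof.
intros Hs. rewrite darboux_V, (kg_Dr_norm s Hs), (tg_Dr_norm s Hs) by auto.
unfold Dr_normal. apply V3_eq; simpl; ring.
Qed.

Lemma vnorm_Dr s : I s -> vnorm (Dr alpha U s) = Dr_norm s.
Proof.
intros Hs. unfold vnorm, Dr_norm. f_equal.
unfold Dr. rewrite dot_vadd_vscale_l, !(dot_comm _ (vadd _ _)), !dot_vadd_vscale_l.
rewrite T_unit, U_unit, U_perp_T, (dot_comm (dT alpha s)), U_perp_T by auto. ring.
Qed.

Lemma unitv_Dr s : I s -> unitv (Dr alpha U s) = Dr_unit s.
Proof.
intros Hs. pose proof (Dr_norm_neq0 s Hs).
unfold unitv. rewrite vnorm_Dr by auto.
unfold Dr, Dr_unit, Dr_cos, Dr_sin. apply V3_eq; simpl; field; auto.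
Qed.

Lemma Dr_unit_unit s : I s -> dot (Dr_unit s) (Dr_unit s) = 1.
Proof.
intros Hs. unfold Dr_unit.
rewrite dot_vadd_vscale_l, !(dot_comm _ (vadd _ _)), !dot_vadd_vscale_l.
rewrite T_unit, U_unit, U_perp_T, (dot_comm (dT alpha s)), U_perp_T by auto.
pose proof (Dr_cos_sin_sq s Hs). lra.
Qed.

Lemma V_perp_Dr_unit s : dot (dV alpha U s) (Dr_unit s) = 0.
Proof.
unfold Dr_unit. rewrite dot_comm, dot_vadd_vscale_l, !(dot_comm _ (dV alpha U s)).
rewrite V_perp_T, V_perp_U. ring.
Qed.

Lemma Dr_frame_coordinates d s : I s ->
  dot (Dr_unit s) d * dot (Dr_unit s) d + dot (Dr_normal s) d * dot (Dr_normal s) d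
  + dot (dV alpha U s) d * dot (dV alpha U s) d = dot d d.
Proof.
intros Hs. unfold Dr_unit, Dr_normal. rewrite !dot_vadd_vscale_l, (darboux_expansion s d d Hs).
rewrite !(dot_comm d).
transitivity ((Dr_cos s * Dr_cos s + Dr_sin s * Dr_sin s)
  * (dot (dT alpha s) d * dot (dT alpha s) d + dot (U s) d * dot (U s) d)
  + dot (dV alpha U s) d * dot (dV alpha U s) d); [ring|].
rewrite Dr_cos_sin_sq by auto. ring.
Qed.

Lemma is_derive_Dr_unit_coordinate d s : I s ->
  is_derive (fun t => dot (Dr_unit t) d) s (Dr_curvature s * dot (Dr_normal s) d).
Proof.
intros Hs. eapply is_derive_eq;
  [apply (is_derive_dot_const I I_open); auto using VCinf_on_Dr_unit|].
rewrite vD_Dr_unit, dot_vscale_l by auto. reflexivity.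
Qed.

Lemma is_derive_Dr_normal_coordinate d s : I s ->
  is_derive (fun t => dot (Dr_normal t) d) s
    (- Dr_curvature s * dot (Dr_unit s) d - Dr_norm s * dot (dV alpha U s) d).
Proof.
intros Hs. eapply is_derive_eq;
  [apply (is_derive_dot_const I I_open); auto using VCinf_on_Dr_normal|].
rewrite vD_Dr_normal, dot_vadd_vscale_l by auto. ring.
Qed.

Lemma is_derive_V_coordinate d s : I s ->
  is_derive (fun t => dot (dV alpha U t) d) s (Dr_norm s * dot (Dr_normal s) d).
Proof.
intros Hs. eapply is_derive_eq; [apply (is_derive_dot_const I I_open); auto using VCinf_on_V|].
rewrite vD_V_Dr_normal, dot_vscale_l by auto. reflexivity.
Qed.

Hypothesis I_interval : is_interval I.
Variable s0 : R.
Hypothesis I_s0 : I s0.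

Lemma general_helix_iff_rel_normal_slant_helix (gamma : R -> V3) (Rf : R -> R) :
  (forall s, I s -> continuous Rf s) ->
  (forall s, I s -> vD gamma s = vscale (Rf s) (dV alpha U s) /\ Rf s <> 0) ->
  general_helix I gamma <-> rel_normal_slant_helix I alpha U.
Proof.
intros CR HR.
assert (tangent : forall s d, I s ->
  dot (unitv (vD gamma s)) d = Rf s / Rabs (Rf s) * dot (dV alpha U s) d).
{ intros s d Hs. rewrite (proj1 (HR s Hs)). apply dot_unitv_vscale, V_unit; auto. }
split.
- intros [_ (d & d_unit & c & Hc)]. exists d. split; auto.
  exists (dot (dV alpha U s0) d). intros s Hs.
  apply (continuous_zero_or_square_constant I I_interval (fun t => dot (dV alpha U t) d) (c * c));
    auto.
  + intros t Ht. apply (Cinf_on_continuous I); auto.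
    apply Cinf_on_dot; auto using VCinf_on_V, VCinf_on_const.
  + intros t Ht. right. rewrite <- (Hc t Ht), tangent by auto.
    transitivity (Rf t / Rabs (Rf t) * (Rf t / Rabs (Rf t))
      * (dot (dV alpha U t) d * dot (dV alpha U t) d)); [|ring].
    rewrite Rdiv_Rabs_sq by apply HR, Ht. ring.
- intros (d & d_unit & c & Hc). split.
  + intros s Hs Hz. apply (proj2 (HR s Hs)).
    assert (E : Rf s * Rf s * dot (dV alpha U s) (dV alpha U s) = dot (vD gamma s) (vD gamma s)).
    { rewrite (proj1 (HR s Hs)). unfold dot, vscale; simpl; ring. }
    rewrite Hz, V_unit in E by auto. unfold dot, vzero in E; simpl in E. nra.
  + exists d. split; auto. exists (Rf s0 / Rabs (Rf s0) * c). intros s Hs.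
    rewrite tangent, Hc by auto. f_equal.
    apply (continuous_zero_or_square_constant I I_interval (fun t => Rf t / Rabs (Rf t)) 1); auto.
    * intros t Ht. apply (continuous_mult (K := R_AbsRing)); [apply CR; auto|].
      apply continuous_Rinv_comp; [apply continuous_Rabs_comp, CR; auto|].
      apply Rabs_no_R0, HR, Ht.
    * intros t Ht. right. apply Rdiv_Rabs_sq, HR, Ht.
Qed.

Lemma rel_normal_slant_helix_Dr_slant_helix :
  rel_normal_slant_helix I alpha U -> Dr_slant_helix I alpha U.
Proof.
intros (d & d_unit & c & Hc).
assert (normal0 : forall s, I s -> dot (Dr_normal s) d = 0).
{ intros s Hs.
  assert (D0 := is_derive_constant_on I I_open _ c s _ Hc Hs (is_derive_V_coordinate d s Hs)).
  destruct (Rmult_integral _ _ D0) as [Hw | Hh]; auto.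
  exfalso. exact (Dr_norm_neq0 s Hs Hw). }
exists d. split; auto. exists (dot (Dr_unit s0) d). intros s Hs. rewrite unitv_Dr by auto.
apply (continuous_zero_or_square_constant I I_interval (fun t => dot (Dr_unit t) d) (1 - c * c));
  auto.
- intros t Ht. apply (Cinf_on_continuous I); auto.
  apply Cinf_on_dot; auto using VCinf_on_Dr_unit, VCinf_on_const.
- intros t Ht. right. pose proof (Dr_frame_coordinates d t Ht) as N.
  rewrite normal0, Hc in N by auto. lra.
Qed.

Lemma Dr_unit_constant :
  (forall s, I s -> Dr_curvature s = 0) -> forall s, I s -> Dr_unit s = Dr_unit s0.
Proof.
intros K0 s Hs. apply V3_eq_dot. intros e.
apply (derive_zero_constant I I_interval (fun t => dot (Dr_unit t) e)); auto.
intros t Ht. eapply is_derive_eq; [apply is_derive_Dr_unit_coordinate; auto|].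
rewrite K0 by auto. ring.
Qed.

Section DrSlantHelix.

Variables (d : V3) (c : R).
Hypothesis d_unit : dot d d = 1.
Hypothesis Dr_unit_d : forall s, I s -> dot (Dr_unit s) d = c.

Lemma Dr_slant_curvature_normal s : I s -> Dr_curvature s * dot (Dr_normal s) d = 0.
Proof.
intros Hs. exact (is_derive_constant_on I I_open _ c s _ Dr_unit_d Hs
  (is_derive_Dr_unit_coordinate d s Hs)).
Qed.

Lemma Dr_slant_V_coordinate s : I s -> Dr_curvature s <> 0 ->
  Dr_norm s * dot (dV alpha U s) d = - Dr_curvature s * c.
Proof.
intros Hs Hk.
assert (near : locally s (fun t => dot (Dr_normal t) d = 0)).
{ assert (L : locally s (fun t => I t /\ Dr_curvature t <> 0)).
  { apply filter_and; [apply I_open; auto|].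
    apply (Cinf_on_continuous I _ s Cinf_on_Dr_curvature Hs (fun y => y <> 0)).
    apply open_neq; auto. }
  eapply filter_imp; [|exact L]. intros t [It Kt].
  destruct (Rmult_integral _ _ (Dr_slant_curvature_normal t It)); [contradiction | auto]. }
assert (D0 : is_derive (fun t => dot (Dr_normal t) d) s 0).
{ apply (is_derive_ext_loc (fun _ => 0)).
  - apply (filter_imp _ _ (fun t Ht => eq_sym Ht) near).
  - apply (is_derive_const (K := R_AbsRing) (V := R_NormedModule)). }
assert (E := is_derive_unique _ _ _ (is_derive_Dr_normal_coordinate d s Hs)).
rewrite (is_derive_unique _ _ _ D0), Dr_unit_d in E by auto. lra.
Qed.

Lemma Dr_slant_curvature_ratio s : I s ->
  Dr_curvature s * Dr_norm s0 = Dr_curvature s0 * Dr_norm s.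
Proof.
intros Hs.
assert (ratio : forall t, I t -> Dr_curvature t / Dr_norm t = Dr_curvature s0 / Dr_norm s0).
{ intros t' Ht'.
  apply (continuous_zero_or_square_constant I I_interval (fun t => Dr_curvature t / Dr_norm t)
    ((1 - c * c) / (c * c))); auto.
  - intros t Ht. apply (Cinf_on_continuous I); auto.
    apply Cinf_on_div; auto using Dr_norm_neq0, Cinf_on_Dr_curvature, Cinf_on_Dr_norm.
  - intros t Ht. cbv beta. pose proof (Dr_norm_neq0 t Ht).
    destruct (Req_dec (Dr_curvature t) 0) as [K0 | K];
      [left; rewrite K0; unfold Rdiv; ring | right].
    assert (H0 : dot (Dr_normal t) d = 0).
    { destruct (Rmult_integral _ _ (Dr_slant_curvature_normal t Ht)); [contradiction | auto]. }
    assert (N := Dr_frame_coordinates d t Ht). rewrite Dr_unit_d, H0, d_unit in N by auto.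
    assert (Qk : dot (dV alpha U t) d = - (Dr_curvature t / Dr_norm t) * c).
    { apply (Rmult_eq_reg_l (Dr_norm t)); auto.
      rewrite Dr_slant_V_coordinate by auto. field. auto. }
    assert (c <> 0) by (intros C0; rewrite C0 in Qk, N; rewrite Qk in N; lra).
    replace (1 - c * c) with (dot (dV alpha U t) d * dot (dV alpha U t) d) by lra.
    rewrite Qk. field. auto. }
pose proof (Dr_norm_neq0 s Hs). pose proof (Dr_norm_neq0 s0 I_s0).
apply (Rmult_eq_reg_r (/ (Dr_norm s * Dr_norm s0))).
- transitivity (Dr_curvature s / Dr_norm s); [field; auto|].
  rewrite ratio by auto. field. auto.
- apply Rinv_neq_0_compat, Rmult_integral_contrapositive_currified; auto.
Qed.

End DrSlantHelix.

Lemma Dr_slant_helix_rel_normal_slant_helix :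
  Dr_slant_helix I alpha U -> rel_normal_slant_helix I alpha U.
Proof.
intros (d & d_unit & c & Hc).
assert (Dr_unit_d : forall s, I s -> dot (Dr_unit s) d = c).
{ intros s Hs. rewrite <- unitv_Dr; auto. }
assert (ratio := Dr_slant_curvature_ratio d c d_unit Dr_unit_d).
destruct (Req_dec (Dr_curvature s0) 0) as [K0 | K].
- assert (flat : forall t, I t -> Dr_curvature t = 0).
  { intros t Ht. apply (Rmult_eq_reg_r (Dr_norm s0)); [|apply Dr_norm_neq0; auto].
    rewrite ratio, K0 by auto. ring. }
  exists (Dr_unit s0). split; [apply Dr_unit_unit; auto|]. exists 0. intros s Hs.
  rewrite <- (Dr_unit_constant flat s Hs). apply V_perp_Dr_unit.
- exists d. split; auto. exists (dot (dV alpha U s0) d). intros s Hs.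
  apply (derive_zero_constant I I_interval (fun t => dot (dV alpha U t) d)); auto. intros t Ht.
  eapply is_derive_eq; [apply is_derive_V_coordinate; auto|].
  assert (Kt : Dr_curvature t <> 0).
  { intros Z. pose proof (ratio t Ht) as Rt. rewrite Z, Rmult_0_l in Rt.
    destruct (Rmult_integral _ _ (eq_sym Rt)) as [|W0]; [contradiction|].
    exact (Dr_norm_neq0 t Ht W0). }
  destruct (Rmult_integral _ _ (Dr_slant_curvature_normal d c Dr_unit_d t Ht)) as [|Z];
    [contradiction|]. rewrite Z. ring.
Qed.

End DarbouxFrame.

Theorem theorem3p12
  (a b : Rbar) (hab : Rbar_lt a b)
  (alpha U : R -> V3) (y1 y2 y3 Rf : R -> R)
  (halpha : vsmooth_on (interval a b) alpha)
  (hU : vsmooth_on (interval a b) U)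
  (hunit : forall s, interval a b s -> dot (dT alpha s) (dT alpha s) = 1)
  (hUunit : forall s, interval a b s -> dot (U s) (U s) = 1)
  (hUT : forall s, interval a b s -> dot (U s) (dT alpha s) = 0)
  (hkt : forall s, interval a b s -> (kg alpha U s, tg alpha U s) <> (0, 0))
  (hy1 : smooth_on (interval a b) y1)
  (hy2 : smooth_on (interval a b) y2)
  (hy3 : smooth_on (interval a b) y3)
  (hR : forall s, interval a b s ->
     vD (assoc_curve alpha U y1 y2 y3) s
     = vscale (Rf s) (dV alpha U s) /\ Rf s <> 0) :
  (general_helix (interval a b) (assoc_curve alpha U y1 y2 y3) <-> rel_normal_slant_helix (interval a b) alpha U) /\
  (rel_normal_slant_helix (interval a b) alpha U <-> Dr_slant_helix (interval a b) alpha U).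
Proof.
destruct (interval_inhabited a b hab) as [s0 Hs0].
pose proof (interval_open a b) as I_open.
pose proof (interval_is_interval a b) as I_interval.
assert (CR : forall s, interval a b s -> continuous Rf s).
{ apply (continuous_speed_along_V _ I_open alpha U halpha hU hunit hUunit hUT
    (assoc_curve alpha U y1 y2 y3)).
  - apply VCinf_on_assoc_curve; auto.
  - intros s Hs. apply hR, Hs. }
split; [|split].
- eapply general_helix_iff_rel_normal_slant_helix; eauto.
- eapply rel_normal_slant_helix_Dr_slant_helix; eauto.
- eapply Dr_slant_helix_rel_normal_slant_helix; eauto.
Qed.
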